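(* Let $N\ge2$, $d\ge1$, $E,S\subset\mathbb{Z}_N^d$ with $$|E|\cdot|S|<\frac{N^d}{4}.$$ Let $1_E$ be the indicator function of $E$, let $r(x)=\sum_{m\notin S}\chi(x\cdot m)\widehat{1_E}(m)$, and let $G(x)=1$ if $|r(x)|\ge 1/2$ and $G(x)=0$ otherwise. Then $G(x)=1_E(x)$ for all $x\in\mathbb{Z}_N^d$ (i.e., $E$ is recovered by the Direct Rounding Algorithm).
   Context: $\chi(t)=e^{2\pi i t/N}$ for $t\in\mathbb{Z}_N$, $x\cdot m=\sum_i x_im_i$ mod $N$, and $\widehat{1_E}(m)=N^{-d}\sum_{x\in E}\chi(-x\cdot m)$. Thus $r$ is the inverse Fourier transform of $\widehat{1_E}$ with the frequencies in $S$ set to zero. *)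

From mathcomp Require Import all_boot all_order all_algebra all_field.
Set Implicit Arguments. Unset Strict Implicit. Unset Printing Implicit Defensive.
Import Order.TTheory GRing.Theory Num.Theory.
Local Open Scope ring_scope.

(* Complex numbers: algC.  N.-root (-1) is the N-th root of -1 with minimal
   non-negative argument, i.e. exp(i*pi/N); hence omega N = exp(2*pi*i/N). *)
Definition omega (N : nat) : algC := (N.-root (-1)) ^+ 2.

Definition chi (N : nat) (t : 'Z_N) : algC := omega N ^+ (val t).

Definition dotZ (N d : nat) (x m : 'rV['Z_N]_d) : 'Z_N :=
  \sum_(i < d) x 0 i * m 0 i.

Definition hat1 (N d : nat) (E : {set 'rV['Z_N]_d}) (m : 'rV['Z_N]_d) : algC :=
  (N%:R ^+ d)^-1 * \sum_(x in E) chi (- dotZ x m).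

Definition rfun (N d : nat) (E S : {set 'rV['Z_N]_d}) (x : 'rV['Z_N]_d) : algC :=
  \sum_(m | m \notin S) chi (dotZ x m) * hat1 E m.

Definition Gfun (N d : nat) (E S : {set 'rV['Z_N]_d}) (x : 'rV['Z_N]_d) : algC :=
  if 2^-1 <= `|rfun E S x| then 1 else 0.

From mathcomp Require Import all_boot all_order all_algebra all_field.
From mathcomp Require Import ring.
Set Implicit Arguments. Unset Strict Implicit. Unset Printing Implicit Defensive.
Import Order.TTheory GRing.Theory Num.Theory.
Local Open Scope ring_scope.

(* Fourier inversion gives 1_E(x) - r(x) = \sum_(m in S) chi(x.m) \hat{1_E}(m), of
   modulus at most |E| |S| / N^d < 1/4, so rounding r(x) at 1/2 recovers 1_E(x).

   The delicate point is that omega N, built from algC's N.-root (-1), is a primitive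
   N-th root of unity.  If its order were m < N, then y := N.-root (-1) would satisfy
   y^m = -1, and some q-th root of y (q = N/m) would be an N-th root of -1 with larger
   real part than y, contradicting the choice made by N.-root.  Such a root exists:
   the q-th roots a_i of a unit u != 1 give numbers w_i = 1/(1 - a_i) with mean
   W = 1/(1 - u), and |1/(1 - a)|^2 = 1/(2 - 2 Re a); if every Re a_i <= Re u, then
   every |w_i| <= |W| and the w_i would have nonpositive variance, forcing a_0 = a_1. *)

Section UnitCircle.
Variable C : numClosedFieldType.
Implicit Types (a u W x z : C).

Lemma conjC_unit a : `|a| = 1 -> a^* = a^-1.
Proof. by move=> a1; rewrite invC_norm a1 expr1n invr1 mul1r. Qed.

Lemma norm_eq1_expr x n : (0 < n)%N -> `|x ^+ n| = 1 -> `|x| = 1.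
Proof. by move=> n0 xn1; apply/eqP; rewrite -(pexpr_eq1 n0) ?normr_ge0 // -normrX xn1. Qed.

Lemma sqr_normC_1subr a : `|a| = 1 -> `|1 - a| ^+ 2 = 2 - 2 * 'Re a.
Proof.
move=> a1; have a0 : a != 0 by rewrite -normr_eq0 a1 oner_eq0.
by rewrite normCK ReE raddfB /= conjC1 conjC_unit //; field.
Qed.

Lemma sum_sqr_normC_sub_mean (I : finType) (w : I -> C) W :
  \sum_i w i = #|I|%:R * W ->
  \sum_i `|w i - W| ^+ 2 = \sum_i `|w i| ^+ 2 - #|I|%:R * `|W| ^+ 2.
Proof.
move=> sumw; under eq_bigr => i _ do rewrite normCK raddfB /= mulrBl !mulrBr.
rewrite !sumrB -mulr_suml -mulr_sumr -raddf_sum /= sumw sumr_const.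
under [in RHS]eq_bigr => i _ do rewrite normCK.
rewrite normCK rmorphM /= conjC_nat -mulr_natr; ring.
Qed.

Lemma inv_1subr_geom a q : a ^+ q != 1 ->
  (1 - a)^-1 = (\sum_(j < q) a ^+ j) / (1 - a ^+ q).
Proof.
move=> aq1; have factor : 1 - a ^+ q = (1 - a) * \sum_(j < q) a ^+ j.
  by rewrite -opprB subrX1 -mulNr opprB.
have : (1 - a) * \sum_(j < q) a ^+ j != 0 by rewrite -factor subr_eq0 eq_sym.
rewrite mulf_eq0 negb_or => /andP[a1 s0].
by rewrite factor invfM mulrCA mulfV ?mulr1.
Qed.

Lemma sum_prim_root_expr z q j : q.-primitive_root z -> (0 < j < q)%N ->
  \sum_(i < q) (z ^+ j) ^+ i = 0.
Proof.
move=> zq /andP[j0 jq]; have zj1 : z ^+ j != 1.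
  by rewrite -(prim_order_dvd zq); apply/negP => /(dvdn_leq j0); rewrite leqNgt jq.
have zjq : (z ^+ j) ^+ q = 1 by rewrite exprAC (prim_expr_order zq) expr1n.
have := subrX1 (z ^+ j) q; rewrite zjq subrr.
by move/esym/eqP; rewrite mulf_eq0 subr_eq0 (negbTE zj1) => /eqP.
Qed.

Lemma sum_inv_1subr_rotations x z q : q.-primitive_root z -> x ^+ q != 1 ->
  \sum_(i < q) (1 - x * z ^+ i)^-1 = q%:R / (1 - x ^+ q).
Proof.
move=> zq xq1; have rot_q i : (x * z ^+ i) ^+ q = x ^+ q.
  by rewrite exprMn exprAC (prim_expr_order zq) expr1n mulr1.
under eq_bigr => i _ do rewrite (@inv_1subr_geom _ q) rot_q //.
rewrite -mulr_suml; congr (_ * _); rewrite exchange_big /=.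
under eq_bigr => j _ do (under eq_bigr => i _ do
  rewrite exprMn -exprM mulnC exprM); under eq_bigr => j _ do rewrite -mulr_sumr.
case: q zq {xq1 rot_q} => [/prim_order_gt0 //|q zq].
rewrite big_ord_recl [X in _ + X]big1 => [|j _]; last first.
  by rewrite sum_prim_root_expr ?mulr0 // /bump /= ltnS ltn_ord.
rewrite /= expr0 mul1r addr0.
by under eq_bigr => i _ do rewrite expr1n; rewrite sumr_const card_ord.
Qed.

Lemma Re_le_rootC n x r : (0 < n)%N -> r \is Num.real -> x ^+ n = r ->
  'Re x <= 'Re (n.-root r).
Proof.
move=> n0 r_real xn; have [Im_ge0|Im_lt0] := boolP (0 <= 'Im x).
  exact: rootC_Re_max.
rewrite -Re_conj; apply: rootC_Re_max => //.
  by rewrite -rmorphXn xn; apply/eqP; rewrite -CrealE.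
by rewrite Im_conj oppr_ge0 ltW // real_ltNge ?Creal_Im.
Qed.

Lemma exists_Re_gt_root x z u q : (1 < q)%N -> q.-primitive_root z ->
  x ^+ q = u -> `|u| = 1 -> u != 1 -> exists i : 'I_q, 'Re u < 'Re (x * z ^+ i).
Proof.
move=> q1 zq xq u1 u_neq1; have q0 := ltnW q1.
have rot_q i : (x * z ^+ i) ^+ q = u.
  by rewrite exprMn exprAC (prim_expr_order zq) expr1n mulr1.
have rot_norm i : `|x * z ^+ i| = 1 by apply: (norm_eq1_expr q0); rewrite rot_q.
have rot_neq1 i : x * z ^+ i != 1.
  by apply: contraNneq u_neq1 => e; rewrite -(rot_q i) e expr1n.
case: (boolP [exists i : 'I_q, 'Re u < 'Re (x * z ^+ i)]) => [/existsP //|].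
move=> /existsPn Re_le; exfalso.
pose w (i : 'I_q) := (1 - x * z ^+ i)^-1; pose W := (1 - u)^-1.
have sqr_norm_inv a : `|a| = 1 -> `|(1 - a)^-1| ^+ 2 = (2 - 2 * 'Re a)^-1.
  by move=> a1; rewrite normfV exprVn sqr_normC_1subr.
have Re_lt1 a : `|a| = 1 -> a != 1 -> 0 < 2 - 2 * 'Re a.
  by move=> a1 an1; rewrite -sqr_normC_1subr // exprn_gt0 // normr_gt0 subr_eq0 eq_sym.
have w_le_W i : `|w i| ^+ 2 <= `|W| ^+ 2.
  rewrite !sqr_norm_inv // lef_pV2 ?posrE ?Re_lt1 // lerD2l lerN2 ler_pM2l //.
  by rewrite real_leNgt ?Creal_Re //; apply: Re_le.
have sumw : \sum_i w i = #|'I_q|%:R * W.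
  by rewrite card_ord sum_inv_1subr_rotations ?xq.
have dev0 : \sum_i `|w i - W| ^+ 2 = 0.
  apply/eqP; rewrite eq_le sumr_ge0 ?andbT => [|i _]; last exact: exprn_ge0.
  rewrite sum_sqr_normC_sub_mean // subr_le0 mulr_natl -sumr_const.
  exact: ler_sum.
have w_eq i : w i = W.
  apply/eqP; rewrite -subr_eq0 -normr_eq0 -sqrf_eq0.
  by apply/eqP; apply: (psumr_eq0P _ dev0) => // j _; exact: exprn_ge0.
have x0 : x != 0 by rewrite -normr_eq0 -[x]mulr1 -(expr0 z) rot_norm oner_eq0.
have /eqP : w (Ordinal q0) = w (Ordinal q1) by rewrite !w_eq.
rewrite /w /= (inj_eq (invr_inj)) (inj_eq (addrI 1)) eqr_opp expr0 mulr1.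
rewrite -{1}[x]mulr1 (inj_eq (mulfI x0)) eq_sym -(prim_order_dvd zq).
by rewrite dvdn1 gtn_eqF.
Qed.

End UnitCircle.

Lemma omega_prim N : (1 < N)%N -> N.-primitive_root (omega N).
Proof.
move=> N1; have N0 := ltnW N1; set y := N.-root (-1 : algC).
have yN : y ^+ N = -1 by exact: rootCK.
have N1_neq1 : (-1 : algC) != 1 by rewrite lt_eqF // (lt_trans (ltrN10 _) ltr01).
have omegaN : omega N ^+ N = 1 by rewrite /omega -exprM mulnC exprM yN sqrrN expr1n.
have [m m_prim m_dvdN] := prim_order_exists N0 omegaN.
have [m_eqN | m_neqN] := eqVneq m N; first by rewrite -{1}m_eqN.
have m0 := prim_order_gt0 m_prim.
have N_eq : N = (N %/ m * m)%N by rewrite divnK.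
set q := (N %/ m)%N in N_eq; have q1 : (1 < q)%N.
  by move: N1 m_neqN; rewrite N_eq; case: q {N_eq} => [|[|q]] //; rewrite mul1n eqxx.
have ym : y ^+ m = -1.
  have /eqP := prim_expr_order m_prim; rewrite /omega -exprM mulnC exprM sqrf_eq1.
  case/orP=> /eqP // ym1; move: yN; rewrite N_eq mulnC exprM ym1 expr1n => /eqP.
  by rewrite eq_sym (negbTE N1_neq1).
have y1 : `|y| = 1 by rewrite norm_rootC normrN normr1 rootC1.
have y_neq1 : y != 1 by apply: contraNneq N1_neq1 => y_eq1; rewrite -yN y_eq1 expr1n.
have [z z_prim] := C_prim_root_exists (ltnW q1).
have [i Re_lt] := exists_Re_gt_root q1 z_prim (rootCK (ltnW q1) y) y1 y_neq1.
have xN : (q.-root y * z ^+ i) ^+ N = -1.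
  by rewrite N_eq exprM exprMn rootCK ?(ltnW q1) // exprAC (prim_expr_order z_prim) expr1n mulr1.
have := Re_le_rootC N0 (rpredN1 _) xN.
by rewrite -/y real_leNgt ?Creal_Re // Re_lt.
Qed.

Lemma round_half (R : numFieldType) (b : bool) (r : R) :
  `|b%:R - r| < 2^-1 -> (2^-1 <= `|r|) = b.
Proof.
case: b => close; last by rewrite mulr0n sub0r normrN in close; exact: lt_geF.
rewrite mulr1n in close; apply/idP.
have := lerB_dist 1 (1 - r); rewrite normr1 subKr; apply: le_trans.
have half : 1 - 2^-1 = 2^-1 :> R by rewrite {1}(splitr 1) div1r addrK.
by rewrite -[X in X <= _]half lerD2l lerN2 ltW.
Qed.

Section Characters.
Variables N d : nat.
Hypothesis N1 : (1 < N)%N.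
Implicit Types (a b : 'Z_N) (t x m : 'rV['Z_N]_d) (E S : {set 'rV['Z_N]_d}).

Lemma chi_prim : ((Zp_trunc N).+2).-primitive_root (omega N).
Proof. by rewrite Zp_cast //; exact: omega_prim. Qed.

Lemma chiD a b : chi (a + b) = chi a * chi b.
Proof. by rewrite /chi -exprD (prim_expr_mod chi_prim). Qed.

Lemma chi_eq1 a : (chi a == 1) = (a == 0).
Proof.
rewrite /chi -(prim_order_dvd chi_prim); apply/idP/eqP => [|-> //].
have [a0 _|a_gt0 /(dvdn_leq a_gt0)] := posnP (val a); first exact: val_inj.
by rewrite leqNgt ltn_ord.
Qed.

Lemma norm_chi a : `|chi a| = 1.
Proof.
have omega1 : `|omega N| = 1.
  by apply: (norm_eq1_expr (ltnW N1)); rewrite (prim_expr_order (omega_prim N1)) normr1.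
by rewrite /chi normrX omega1 expr1n.
Qed.

Lemma dotZDr x m m' : dotZ x (m + m') = dotZ x m + dotZ x m'.
Proof. by rewrite /dotZ -big_split; apply: eq_bigr => i _; rewrite mxE mulrDr. Qed.

Lemma dotZBl x x' m : dotZ (x - x') m = dotZ x m - dotZ x' m.
Proof. by rewrite /dotZ -sumrB; apply: eq_bigr => i _; rewrite !mxE mulrBl. Qed.

Lemma dotZ0l m : dotZ 0 m = 0.
Proof. by rewrite /dotZ big1 // => i _; rewrite mxE mul0r. Qed.

Lemma sum_chi_dotZ t : \sum_m chi (dotZ t m) = if t == 0 then (N ^ d)%:R else 0.
Proof.
have [-> | t_neq0] := eqVneq t 0.
  under eq_bigr => m _ do rewrite dotZ0l.
  by rewrite sumr_const card_mx card_ord Zp_cast // mul1n /chi expr0.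
have [i ti] : exists i, t 0 i != 0.
  apply/existsP; apply: contraNT t_neq0 => /existsPn t0; apply/eqP/matrixP => a j.
  by rewrite ord1 mxE; apply/eqP; rewrite -[_ == _]negbK t0.
pose e : 'rV['Z_N]_d := delta_mx 0 i.
have dot_e : dotZ t e = t 0 i.
  rewrite /dotZ (bigD1 i) //= big1 => [|j ji]; first by rewrite mxE !eqxx mulr1 addr0.
  by rewrite mxE eqxx (negbTE ji) mulr0.
set s := \sum_m _; have : s = chi (t 0 i) * s.
  rewrite {1}/s (reindex_inj (addIr e)) /= mulr_sumr.
  by apply: eq_bigr => m _; rewrite dotZDr chiD dot_e mulrC.
move/eqP; rewrite -{1}[s]mul1r -subr_eq0 -mulrBl mulf_eq0 subr_eq0 eq_sym chi_eq1.
by rewrite (negbTE ti) => /eqP.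
Qed.

Lemma fourier_inversion E x : \sum_m chi (dotZ x m) * hat1 E m = (x \in E)%:R.
Proof.
rewrite /hat1; under eq_bigr => m _ do rewrite mulrCA mulr_sumr.
rewrite -mulr_sumr exchange_big /=.
under eq_bigr => e _ do (under eq_bigr => m _ do rewrite -chiD -dotZBl).
under eq_bigr => e _ do rewrite sum_chi_dotZ subr_eq0.
have [xE | xE] := boolP (x \in E).
  rewrite (bigD1 x) //= eqxx big1 => [|e /andP[_ e_neq_x]]; last first.
    by rewrite eq_sym (negbTE e_neq_x).
  by rewrite addr0 natrX mulVf // expf_neq0 // pnatr_eq0 -lt0n ltnW.
rewrite big1 ?mulr0 // => e eE; case: eqP => // x_eq_e.
by rewrite x_eq_e eE in xE.
Qed.

Lemma norm_hat1_le E m : `|hat1 E m| <= #|E|%:R / (N ^ d)%:R.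
Proof.
rewrite /hat1 normrM normfV normrX normr_nat -natrX mulrC ler_wpM2r ?invr_ge0 //.
apply: le_trans (ler_norm_sum _ _ _) _.
by rewrite -sum1_card natr_sum; apply: ler_sum => e _; rewrite norm_chi.
Qed.

Lemma norm_rfun_error E S x :
  `|(x \in E)%:R - rfun E S x| <= (#|E| * #|S|)%:R / (N ^ d)%:R.
Proof.
rewrite -(fourier_inversion E x) (bigID (mem S)) /= addrK.
apply: le_trans (ler_norm_sum _ _ _) _.
rewrite natrM mulrAC mulrC -sum1_card natr_sum mulr_suml; apply: ler_sum => m _.
by rewrite normrM norm_chi !mul1r norm_hat1_le.
Qed.

End Characters.

Theorem theorem4 (N d : nat) (E S : {set 'rV['Z_N]_d}) :
  (1 < N)%N -> (0 < d)%N ->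
  (4 * (#|E| * #|S|) < N ^ d)%N ->
  forall x : 'rV['Z_N]_d, Gfun E S x = (x \in E)%:R.
Proof.
move=> N1 _ small x; rewrite /Gfun (@round_half _ (x \in E)).
  by case: (x \in E).
apply: le_lt_trans (norm_rfun_error N1 E S x) _.
rewrite ltr_pdivrMr ?ltr0n ?expn_gt0 ?(ltnW N1) //.
have half4 : 2^-1 * 4%:R = 2%:R :> algC.
  by rewrite -[4%N]/(2 * 2)%N natrM mulKf ?pnatr_eq0.
apply: le_lt_trans (_ : _ <= 2^-1 * (4 * (#|E| * #|S|))%:R) _.
  by rewrite [(4 * _)%:R]natrM mulrA half4 ler_peMl ?ler1n.
by rewrite ltr_pM2l ?invr_gt0 ?ltr0n // ltr_nat.
Qed.
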